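(* Let $n\ge 3$ and let $G$ be a labeled star graph $K_{1,n-1}$ with vertex set $[n]$. Then $X(G;\mathbf{x},q)$ is palindromic if and only if $n$ is odd and the central vertex (the unique vertex of degree greater than $1$) is labeled $\frac{n+1}{2}$.
   Context: A labeled graph is a finite simple graph with vertex set $[n]$. A proper coloring is $c\colon[n]\to\{1,2,\dots\}$ with adjacent vertices colored differently; $\operatorname{asc}(c)=\#\{ij\in E: i<j,\ c(i)<c(j)\}$. The CQF is $X(G;\mathbf{x},q)=\sum_{c \text{ proper}} x_{c(1)}\cdots x_{c(n)}q^{\operatorname{asc}(c)}$. It is palindromic if, with $m=|E|$, the coefficient of $q^k$ (a quasisymmetric function) equals the coefficient of $q^{m-k}$ for every $k$. *)

From mathcomp Require Import all_boot.
Set Implicit Arguments. Unset Strict Implicit. Unset Printing Implicit Defensive.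

(* Labeled graphs on vertex set [n], encoded as 'I_n (vertex i : 'I_n has
   label i+1), edge relation e : rel 'I_n.  Colours: c : 'I_n -> 'I_N,
   colour j : 'I_N stands for the positive integer j+1 (variable x_{j+1}). *)

Section CQF.
Variable n : nat.
Variable e : rel 'I_n.

Definition nedges : nat := #|[set p : 'I_n * 'I_n | e p.1 p.2 && (p.1 < p.2)]|.

Definition proper (N : nat) (c : {ffun 'I_n -> 'I_N}) : bool :=
  [forall i, forall j, e i j ==> (c i != c j)].

Definition asc (N : nat) (c : {ffun 'I_n -> 'I_N}) : nat :=
  #|[set p : 'I_n * 'I_n | [&& e p.1 p.2, p.1 < p.2 & c p.1 < c p.2]]|.

(* Coefficient of the monomial x_1^{al 0} ... x_N^{al (N-1)} q^k in
   X(G; x, q) = sum_{c proper} x_{c(1)}...x_{c(n)} q^{asc c}.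
   Every colouring contributing to this monomial takes values in [N]. *)
Definition cqf_coeff (N : nat) (al : {ffun 'I_N -> nat}) (k : nat) : nat :=
  #|[set c : {ffun 'I_n -> 'I_N} |
      [&& proper c, [forall j, #|[set i | c i == j]| == al j] & asc c == k]]|.

Definition cqf_palindromic : Prop :=
  forall (N : nat) (al : {ffun 'I_N -> nat}) (k : nat),
    k <= nedges -> cqf_coeff al k = cqf_coeff al (nedges - k).

End CQF.

Definition is_star (n : nat) (e : rel 'I_n) (v : 'I_n) : Prop :=
  forall i j : 'I_n, e i j = (i != j) && ((i == v) || (j == v)).

From Pilot Require Import Defs.
From mathcomp Require Import all_boot.
From mathcomp Require Import zify.

Set Implicit Arguments. Unset Strict Implicit. Unset Printing Implicit Defensive.

(* Reversing the labels, i |-> n+1-i, swaps ascents and descents of a proper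
   colouring while preserving its content.  When this reversal is an
   automorphism of G (for the star: the centre is labeled (n+1)/2), it maps the
   colourings counted by the coefficient of q^k onto those counted by q^(m-k).
   Conversely, colour the centre 1 and the leaves 2: this is the only proper
   colouring of the star with that content, and its ascents and descents are
   the n - c leaves above and the c - 1 leaves below the centre label c, so
   palindromicity in that monomial forces n - c = c - 1. *)

Definition desc n (e : rel 'I_n) N (c : {ffun 'I_n -> 'I_N}) : nat :=
  #|[set p : 'I_n * 'I_n | [&& e p.1 p.2, p.1 < p.2 & c p.2 < c p.1]]|.

Lemma asc_add_desc n (e : rel 'I_n) N (c : {ffun 'I_n -> 'I_N}) :
  Defs.proper e c -> asc e c + desc e c = nedges e.
Proof.
move=> /forallP pc.
rewrite /nedges -(cardsID [set p : 'I_n * 'I_n | c p.1 < c p.2]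
  [set p : 'I_n * 'I_n | e p.1 p.2 && (p.1 < p.2)]) /asc /desc.
congr (_ + _); apply: eq_card => -[i j]; rewrite !inE /=.
  by case: (e i j); case: (i < j).
case eij: (e i j); case: (i < j) => //=; rewrite ?andbF ?andbT //.
have /forallP/(_ j) := pc i; rewrite eij /= => cij.
by move: (cij : (c i : nat) != c j); case: ltngtP.
Qed.

Section Reversal.
Variables (n : nat) (e : rel 'I_n).
Hypothesis e_sym : forall i j, e i j = e j i.
Hypothesis e_rev : forall i j, e (rev_ord i) (rev_ord j) = e i j.

Definition revc N (c : {ffun 'I_n -> 'I_N}) : {ffun 'I_n -> 'I_N} :=
  [ffun i => c (rev_ord i)].

Lemma revc_inj N : injective (@revc N).
Proof.
move=> c1 c2 /ffunP eq_c; apply/ffunP => i.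
by have := eq_c (rev_ord i); rewrite !ffunE rev_ordK.
Qed.

Lemma proper_revc N (c : {ffun 'I_n -> 'I_N}) :
  Defs.proper e c -> Defs.proper e (revc c).
Proof.
move=> /forallP pc; apply/forallP => i; apply/forallP => j; apply/implyP => eij.
have /forallP/(_ (rev_ord j)) := pc (rev_ord i).
by rewrite !ffunE e_rev eij.
Qed.

Lemma content_revc N (c : {ffun 'I_n -> 'I_N}) j :
  #|[set i | revc c i == j]| = #|[set i | c i == j]|.
Proof.
rewrite -[RHS](card_preimset _ (@rev_ord_inj n)); apply: eq_card => i.
by rewrite !inE ffunE.
Qed.

Lemma asc_revc N (c : {ffun 'I_n -> 'I_N}) : asc e (revc c) = desc e c.
Proof.
pose f (p : 'I_n * 'I_n) := (rev_ord p.2, rev_ord p.1).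
have f_inv : involutive f by move=> [a b]; rewrite /f /= !rev_ordK.
rewrite /desc -(card_preimset _ (inv_inj f_inv)); apply: eq_card => -[x y].
rewrite !inE /= !ffunE e_sym e_rev.
have := ltn_ord x; have := ltn_ord y => lt_y_n lt_x_n.
by have -> : (n - y.+1 < n - x.+1) = (x < y) by lia.
Qed.

Lemma cqf_coeff_le_rev N (al : {ffun 'I_N -> nat}) k : k <= nedges e ->
  cqf_coeff e al k <= cqf_coeff e al (nedges e - k).
Proof.
move=> le_k_m; rewrite /cqf_coeff -(card_imset _ (@revc_inj N)).
apply: subset_leq_card; apply/subsetP => d /imsetP [c].
rewrite inE => /and3P [pc /forallP ct /eqP asc_c] ->.
rewrite inE proper_revc //=; apply/andP; split.
  by apply/forallP => j; rewrite content_revc; apply: ct.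
by rewrite asc_revc -(asc_add_desc pc) asc_c addKn.
Qed.

Lemma cqf_palindromic_rev : cqf_palindromic e.
Proof.
move=> N al k le_k_m; apply/eqP; rewrite eqn_leq cqf_coeff_le_rev //=.
by have := cqf_coeff_le_rev al (leq_subr k (nedges e)); rewrite subKn.
Qed.

End Reversal.

Lemma card_ord_lt n m : m <= n -> #|[set i : 'I_n | i < m]| = m.
Proof.
move=> le_m_n.
have w_inj : injective (widen_ord le_m_n) by move=> a b /(congr1 val) /= /val_inj.
rewrite -[RHS](card_ord m) -(card_imset _ w_inj).
apply: eq_card => i; rewrite inE.
apply/idP/imsetP => [lt_i_m | [j _ ->]]; last exact: (ltn_ord j).
by exists (Ordinal lt_i_m) => //; apply: val_inj.
Qed.

Lemma card_ord_gt n m : m < n -> #|[set i : 'I_n | m < i]| = n - m.+1.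
Proof.
move=> lt_m_n; have -> : [set i : 'I_n | m < i] = ~: [set i : 'I_n | i < m.+1].
  by apply/setP => i; rewrite !inE ltnS ltnNge.
by rewrite cardsCs setCK card_ord card_ord_lt.
Qed.

Lemma ord2_neq_eq (x y z : 'I_2) : x != y -> z != y -> x = z.
Proof.
by case: x y z => [[|[|?]] ?] [[|[|?]] ?] [[|[|?]] ?] //= *; apply: val_inj.
Qed.

Section Star.
Variables (n : nat) (e : rel 'I_n) (v : 'I_n).
Hypothesis e_star : is_star e v.

Lemma star_sym i j : e i j = e j i.
Proof. by rewrite !e_star eq_sym orbC. Qed.

Lemma star_rev : rev_ord v = v -> forall i j, e (rev_ord i) (rev_ord j) = e i j.
Proof.
move=> rev_v i j; rewrite !e_star (inj_eq (@rev_ord_inj n)).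
by rewrite !(can2_eq (@rev_ordK n) (@rev_ordK n)) rev_v.
Qed.

Definition star2 : {ffun 'I_n -> 'I_2} :=
  [ffun i => if i == v then ord0 else ord_max].

Definition content2 : {ffun 'I_2 -> nat} :=
  [ffun j => if j == ord0 then 1 else n.-1].

Lemma proper_star2 : Defs.proper e star2.
Proof.
apply/forallP => i; apply/forallP => j; apply/implyP; rewrite e_star !ffunE.
by case: (i =P v) => [->|_]; case: (j =P v) => [->|_]; rewrite ?eqxx ?andbF.
Qed.

Lemma content_star2 : [forall j, #|[set i | star2 i == j]| == content2 j].
Proof.
apply/forallP => j; rewrite ffunE; have [-> | j_neq0] := eqVneq j ord0.
  apply/eqP; rewrite -[RHS](cards1 v).
  by apply: eq_card => i; rewrite !inE ffunE; case: (i == v).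
rewrite (ord2_neq_eq j_neq0 (_ : ord_max != ord0)) //.
apply/eqP; rewrite -[in RHS](card_ord n) -(cardsC1 v).
by apply: eq_card => i; rewrite !inE ffunE; case: (i == v).
Qed.

Lemma asc_star2 : asc e star2 = n - v.+1.
Proof.
rewrite -(card_ord_gt (ltn_ord v)) -[RHS]mul1n -[in RHS](cards1 v) -cardsX.
apply: eq_card => -[x y]; rewrite !inE /= e_star !ffunE.
by have [-> | xv] := eqVneq x v; have [-> | yv] := eqVneq y v;
  rewrite /= ?ltnn ?andbF ?andbT.
Qed.

Lemma desc_star2 : desc e star2 = v.
Proof.
rewrite -[in RHS](card_ord_lt (ltnW (ltn_ord v))) -[RHS]muln1 -[in RHS](cards1 v).
rewrite -cardsX; apply: eq_card => -[x y]; rewrite !inE /= e_star !ffunE.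
by have [-> | xv] := eqVneq x v; have [-> | yv] := eqVneq y v;
  rewrite /= ?ltnn ?andbF ?andbT // xv.
Qed.

Hypothesis n_ge3 : 3 <= n.

Lemma star2_unique (c : {ffun 'I_n -> 'I_2}) :
  Defs.proper e c -> [forall j, #|[set i | c i == j]| == content2 j] -> c = star2.
Proof.
move=> /forallP pc /forallP ct.
have c_leaf i : i != v -> c i != c v.
  by move=> iv; have /forallP/(_ v) := pc i; rewrite e_star iv eqxx orbT.
have cv0 : c v = ord0.
  apply/eqP/contraT => cv; have /eqP := ct ord0; rewrite ffunE eqxx.
  have : [set~ v] \subset [set i | c i == ord0].
    apply/subsetP => i; rewrite !inE => iv.
    by rewrite (ord2_neq_eq (c_leaf i iv) (_ : ord0 != c v)) // eq_sym.
  by move/subset_leq_card; rewrite cardsC1 card_ord; lia.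
apply/ffunP => i; rewrite ffunE; have [-> // | iv] := eqVneq i v.
by apply: ord2_neq_eq (c_leaf i iv) _; rewrite cv0.
Qed.

Lemma star_palindromic_balanced : cqf_palindromic e -> n - v.+1 = v.
Proof.
move=> pal.
have m_eq : nedges e = n - v.+1 + v.
  by rewrite -(asc_add_desc proper_star2) asc_star2 desc_star2.
have := pal 2 content2 (n - v.+1); rewrite m_eq addKn => /(_ (leq_addr _ _)) coeff_eq.
have : 0 < cqf_coeff e content2 v.
  rewrite -coeff_eq; apply/card_gt0P; exists star2.
  by rewrite inE proper_star2 content_star2 asc_star2 eqxx.
case/card_gt0P => c; rewrite inE => /and3P [pc ct /eqP asc_c].
by rewrite -asc_star2 -(star2_unique pc ct).
Qed.

End Star.

Theorem proposition5p1 (n : nat) (hn : 3 <= n) (e : rel 'I_n) (v : 'I_n)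
    (hstar : is_star e v) :
  cqf_palindromic e <-> (odd n /\ (v : nat).+1 = (n.+1)./2).
Proof.
split=> [pal | [odd_n center]].
  have balanced := star_palindromic_balanced hstar hn pal.
  have lt_v_n := ltn_ord v.
  have n_eq : n = v.*2.+1 by lia.
  by rewrite [in odd _]n_eq [in RHS]n_eq /= odd_double doubleK.
have rev_v : rev_ord v = v.
  apply: val_inj => /=; move: center; rewrite -divn2.
  have : n %% 2 = 1 by rewrite modn2 odd_n.
  lia.
exact: cqf_palindromic_rev (star_sym hstar) (star_rev hstar rev_v).
Qed.
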